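(* Let $\mathsf{K}$ be a universal class of $\mathcal{L}$-algebras with finite presentations. Then $\mathsf{K}$ has the conservative congruence extension property if, and only if, for all finite disjoint sets of variables $\overline{x},\overline{y}$ and every conjunction of literals $\psi(\overline{x},\overline{y})$ there is a quantifier-free formula $\chi(\overline{x})$ such that (i) $\mathsf{K}\models\psi\to\chi$, and (ii) for every $\mathbf{A}\in\mathsf{K}$ generated by a tuple $\overline{a}\in A^{\overline{x}}$ with $\mathbf{A}\models\chi(\overline{a})$ and such that $\mathbf{A}\models\varepsilon(\overline{a})$ for every equation $\varepsilon(\overline{x})$ with $\mathsf{K}\models\psi^+\to\varepsilon$, there exist $\mathbf{B}\in\mathsf{K}$ extending $\mathbf{A}$ and $\overline{b}\in B^{\overline{y}}$ with $\mathbf{B}\models\psi(\overline{a},\overline{b})$.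
   Context: $\mathcal{L}$ is an algebraic first-order language with at least one constant symbol. Literals are equations and negated equations; for a conjunction of literals $\psi$, $\psi^+$ is the conjunction of the equations occurring positively. $\mathsf{K}\models\alpha$ means all members satisfy $\alpha$ under all assignments. A universal class is closed under isomorphic images, subalgebras and ultraproducts. A finite presentation of $\mathbf{A}\in\mathsf{K}$ is a pair $(\overline{a},\pi)$ where $\overline{a}\in A^{\overline{x}}$ is a finite generating tuple of $\mathbf{A}$ and $\pi(\overline{x})$ is a conjunction of equations with $\mathbf{A}\models\pi(\overline{a})$ such that for every equation $\varepsilon(\overline{x})$, $\mathbf{A}\models\varepsilon(\overline{a})$ iff $\mathsf{K}\models\pi\to\varepsilon$. $\mathsf{K}$ has finite presentations if for every finite $\overline{x}$ and conjunction of equations $\pi(\overline{x})$ satisfiable in $\mathsf{K}$ there are $\mathbf{A}\in\mathsf{K}$ and $\overline{a}\in A^{\overline{x}}$ with $(\overline{a},\pi)$ a finite presentation of $\mathbf{A}$. For $\mathbf{B}\in\mathsf{K}$, $\mathfrak{D}^+(\mathbf{B})$ is the set of atomic sentences, in $\mathcal{L}$ extended with names for elements of $B$, true in $\mathbf{B}$. $\mathsf{K}$ has the conservative congruence extension property if whenever $\mathbf{B}\in\mathsf{K}$ has a finite presentation $((\overline{a},\overline{b}),\pi(\overline{x},\overline{y}))$, $\mathbf{A}$ is the subalgebra of $\mathbf{B}$ generated by $\overline{a}$, no element of $\overline{b}$ lies in $A$, and $\rho(\overline{x},\overline{y})$ is a conjunction of negated equations with $\mathbf{B}\models\rho(\overline{a},\overline{b})$,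 there is a quantifier-free formula $\chi(\overline{x})$ with $\mathrm{Th}(\mathsf{K})\cup\mathfrak{D}^+(\mathbf{B})\vdash\rho(\overline{a},\overline{b})\to\chi(\overline{a})$ such that for every surjective homomorphism $h\colon\mathbf{A}\to\mathbf{A}'$ with $\mathbf{A}'\in\mathsf{K}$ and $\mathbf{A}'\models\chi(h(\overline{a}))$, there exist $\mathbf{B}'\in\mathsf{K}$ extending $\mathbf{A}'$ and a surjective homomorphism $h'\colon\mathbf{B}\to\mathbf{B}'$ extending $h$ with $\mathbf{B}'\models\rho(h(\overline{a}),h'(\overline{b}))$. *)

From mathcomp Require Import all_boot.
Set Implicit Arguments.
Unset Strict Implicit.
Unset Printing Implicit Defensive.

Record signature := Signature { opsym : Type; oparity : opsym -> nat }.

Section UA.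
Variable L : signature.

Record algebra := Algebra {
  carrier :> Type;
  op : forall f : opsym L, ('I_(oparity f) -> carrier) -> carrier }.
Arguments op : clear implicits.

Inductive term (V : Type) : Type :=
| Var : V -> term V
| App : forall f : opsym L, ('I_(oparity f) -> term V) -> term V.

Fixpoint eval (A : algebra) (V : Type) (v : V -> A) (t : term V) : A :=
  match t with
  | Var x => v x
  | App f args => op A f (fun i => eval v (args i))
  end.

Definition equation (V : Type) := (term V * term V)%type.

Inductive literal (V : Type) : Type :=
| LPos : term V -> term V -> literal V
| LNeg : term V -> term V -> literal V.

Definition sat_eq (A : algebra) V (v : V -> A) (e : equation V) : Prop :=
  eval v e.1 = eval v e.2.

Definition sat_eqs (A : algebra) V (v : V -> A) (p : seq (equation V)) : Prop :=
  foldr (fun e P => sat_eq v e /\ P) True p.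

Definition sat_neqs (A : algebra) V (v : V -> A) (p : seq (equation V)) : Prop :=
  foldr (fun e P => ~ sat_eq v e /\ P) True p.

Definition sat_lit (A : algebra) V (v : V -> A) (l : literal V) : Prop :=
  match l with
  | LPos s t => eval v s = eval v t
  | LNeg s t => eval v s <> eval v t
  end.

Definition sat_lits (A : algebra) V (v : V -> A) (p : seq (literal V)) : Prop :=
  foldr (fun l P => sat_lit v l /\ P) True p.

Fixpoint pos_part V (p : seq (literal V)) : seq (equation V) :=
  match p with
  | [::] => [::]
  | LPos s t :: q => (s, t) :: pos_part q
  | LNeg _ _ :: q => pos_part q
  end.

Inductive qff (V : Type) : Type :=
| QTrue : qff V
| QFalse : qff V
| QEq : term V -> term V -> qff V
| QNot : qff V -> qff V
| QAnd : qff V -> qff V -> qff V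
| QOr : qff V -> qff V -> qff V
| QImp : qff V -> qff V -> qff V.

Fixpoint satq (A : algebra) V (v : V -> A) (p : qff V) : Prop :=
  match p with
  | QTrue => True
  | QFalse => False
  | QEq s t => eval v s = eval v t
  | QNot q => ~ satq v q
  | QAnd q r => satq v q /\ satq v r
  | QOr q r => satq v q \/ satq v r
  | QImp q r => satq v q -> satq v r
  end.

Inductive fo : Type -> Type :=
| FEq : forall V, term V -> term V -> fo V
| FTrue : forall V, fo V
| FFalse : forall V, fo V
| FNot : forall V, fo V -> fo V
| FAnd : forall V, fo V -> fo V -> fo V
| FOr : forall V, fo V -> fo V -> fo V
| FImp : forall V, fo V -> fo V -> fo V
| FAll : forall V, fo (option V) -> fo V
| FEx : forall V, fo (option V) -> fo V.

Definition extend (A : Type) V (v : V -> A) (c : A) : option V -> A :=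
  fun o => match o with Some x => v x | None => c end.

Fixpoint sat (A : algebra) V (p : fo V) : (V -> A) -> Prop :=
  match p in fo V0 return (V0 -> A) -> Prop with
  | FEq _ s t => fun v => eval v s = eval v t
  | FTrue _ => fun _ => True
  | FFalse _ => fun _ => False
  | FNot _ q => fun v => ~ sat q v
  | FAnd _ q r => fun v => sat q v /\ sat r v
  | FOr _ q r => fun v => sat q v \/ sat r v
  | FImp _ q r => fun v => sat q v -> sat r v
  | FAll _ q => fun v => forall c : A, sat q (extend v c)
  | FEx _ q => fun v => exists c : A, sat q (extend v c)
  end.

Definition no_var (A : Type) : Empty_set -> A := fun e => match e with end.

Definition models_Th (K : algebra -> Prop) (M : algebra) : Prop :=
  forall phi : fo Empty_set,
    (forall A, K A -> sat phi (no_var A)) -> sat phi (no_var M).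

(* g : B -> M interprets the names of elements of B so that M satisfies
   the positive atomic diagram D+(B) *)
Definition sat_posdiag (B M : algebra) (g : B -> M) : Prop :=
  forall s t : term B, eval (fun x : B => x) s = eval (fun x : B => x) t ->
    eval g s = eval g t.

Definition hom (A B : algebra) (h : A -> B) : Prop :=
  forall f (args : 'I_(oparity f) -> A), h (op A f args) = op B f (fun i => h (args i)).

Definition iso (A B : algebra) (h : A -> B) : Prop :=
  hom h /\ injective h /\ (forall y, exists x, h x = y).

Definition closed (A : algebra) (S : A -> Prop) : Prop :=
  forall f (args : 'I_(oparity f) -> A), (forall i, S (args i)) -> S (op A f args).

Definition SubAlg (A : algebra) (S : A -> Prop) (hS : closed S) : algebra :=
  @Algebra {x : A | S x}
    (fun f args => exist S (op A f (fun i => proj1_sig (args i)))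
                     (hS f _ (fun i => proj2_sig (args i)))).

Definition gen (A : algebra) V (a : V -> A) (c : A) : Prop :=
  forall S : A -> Prop, closed S -> (forall i, S (a i)) -> S c.

Lemma gen_closed (A : algebra) V (a : V -> A) : closed (gen a).
Proof. move=> f args H S hS ha; apply: (hS f args) => i; exact: (H i S hS ha). Qed.

Lemma gen_in (A : algebra) V (a : V -> A) (i : V) : gen a (a i).
Proof. rewrite /gen => S _ ha; exact: ha. Qed.

Definition SubGen (A : algebra) V (a : V -> A) : algebra :=
  SubAlg (@gen_closed A V a).

Definition gen_tuple (A : algebra) V (a : V -> A) : V -> SubGen a :=
  fun i => exist (gen a) (a i) (@gen_in A V a i).

Definition generates (A : algebra) V (a : V -> A) : Prop :=
  forall c : A, gen a c.

Definition ultrafilter (I : Type) (U : (I -> Prop) -> Prop) : Prop :=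
  [/\ U (fun _ => True), ~ U (fun _ => False),
      (forall X Y, U X -> (forall i, X i -> Y i) -> U Y),
      (forall X Y, U X -> U Y -> U (fun i => X i /\ Y i))
    & (forall X, U X \/ U (fun i => ~ X i))].

(* C is (isomorphic to) the ultraproduct of the family Af modulo U: there is a
   surjective homomorphism from the direct product onto C whose kernel is
   the U-agreement relation *)
Definition is_ultraproduct (I : Type) (Af : I -> algebra)
    (U : (I -> Prop) -> Prop) (C : algebra) : Prop :=
  exists h : (forall i, Af i) -> C,
    [/\ (forall y, exists s, h s = y),
        (forall s t, h s = h t <-> U (fun i => s i = t i))
      & (forall f (args : 'I_(oparity f) -> forall i, Af i),
           h (fun i => op (Af i) f (fun k => args k i)) =
           op C f (fun k => h (args k)))].

Definition universal_class (K : algebra -> Prop) : Prop :=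
  [/\ (forall (A B : algebra) (h : A -> B), K A -> iso h -> K B),
      (forall (B : algebra) (S : B -> Prop) (hS : closed S), K B -> K (SubAlg hS))
    & (forall I (Af : I -> algebra) U C,
         (forall i, K (Af i)) -> ultrafilter U -> is_ultraproduct Af U C -> K C)].

Definition K_entails (K : algebra -> Prop) V (pi : seq (equation V)) (e : equation V) :=
  forall A, K A -> forall v : V -> A, sat_eqs v pi -> sat_eq v e.

Definition fin_pres (K : algebra -> Prop) (B : algebra) V (c : V -> B)
    (pi : seq (equation V)) : Prop :=
  [/\ generates c, sat_eqs c pi & forall e, sat_eq c e <-> K_entails K pi e].

Definition has_fin_pres (K : algebra -> Prop) : Prop :=
  forall (n : nat) (pi : seq (equation 'I_n)),
    (exists A, K A /\ exists v : 'I_n -> A, sat_eqs v pi) ->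
    exists A, K A /\ exists a : 'I_n -> A, fin_pres K a pi.

Definition tup2 (A : Type) X Y (a : X -> A) (b : Y -> A) : X + Y -> A :=
  fun k => match k with inl i => a i | inr j => b j end.

(* Th(K) u D+(B) |= rho(a,b) -> chi(a)  (semantic consequence; by
   completeness equivalent to derivability) *)
Definition ThD_conseq (K : algebra -> Prop) (B : algebra) n m
    (a : 'I_n -> B) (b : 'I_m -> B) (rho : seq (equation ('I_n + 'I_m)))
    (chi : qff 'I_n) : Prop :=
  forall (M : algebra) (g : B -> M), models_Th K M -> sat_posdiag g ->
    sat_neqs (fun k => g (tup2 a b k)) rho -> satq (fun i => g (a i)) chi.

Definition CCEP (K : algebra -> Prop) : Prop :=
  forall (B : algebra) (n m : nat) (a : 'I_n -> B) (b : 'I_m -> B)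
         (pi : seq (equation ('I_n + 'I_m))),
    K B -> fin_pres K (tup2 a b) pi ->
    (forall j, ~ gen a (b j)) ->
    forall rho : seq (equation ('I_n + 'I_m)),
      sat_neqs (tup2 a b) rho ->
      exists chi : qff 'I_n,
        ThD_conseq K a b rho chi /\
        forall (A' : algebra) (h : SubGen a -> A'),
          K A' -> hom h -> (forall y, exists x, h x = y) ->
          satq (fun i => h (gen_tuple a i)) chi ->
          exists (B' : algebra) (e : A' -> B') (h' : B -> B'),
            K B' /\ hom e /\ injective e /\ hom h' /\
            (forall y, exists x, h' x = y) /\
            (forall x : SubGen a, h' (proj1_sig x) = e (h x)) /\
            sat_neqs (tup2 (fun i => e (h (gen_tuple a i)))
                               (fun j => h' (b j))) rho.

Definition amalg_condition (K : algebra -> Prop) : Prop :=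
  forall (n m : nat) (psi : seq (literal ('I_n + 'I_m))),
    exists chi : qff 'I_n,
      (forall A, K A -> forall v : 'I_n + 'I_m -> A,
         sat_lits v psi -> satq (fun i => v (inl i)) chi) /\
      (forall (A : algebra) (a : 'I_n -> A),
         K A -> generates a -> satq a chi ->
         (forall s t : term 'I_n,
            (forall A0, K A0 -> forall v : 'I_n + 'I_m -> A0,
               sat_eqs v (pos_part psi) ->
               eval (fun i => v (inl i)) s = eval (fun i => v (inl i)) t) ->
            eval a s = eval a t) ->
         exists (B : algebra) (e : A -> B) (b : 'I_m -> B),
           [/\ K B, hom e, injective e & sat_lits (tup2 (fun i => e (a i)) b) psi]).

End UA.

From Pilot Require Import Defs.
From mathcomp Require Import all_boot boolp.
Set Implicit Arguments. Unset Strict Implicit. Unset Printing Implicit Defensive.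

(* Everything revolves around the algebra presented by psi^+ on generators (a, b): it lies in K,
   its homomorphisms into members of K are exactly the assignments satisfying psi^+, and it
   satisfies every negated equation of psi consistent with psi^+ in K.
   From CCEP: apply CCEP to this algebra and the negated equations of psi, after rewriting the
   generators b_j that already lie in <a> as terms in a; the formula chi it returns works.
   To CCEP: for B presented by pi and the negated equations rho, take the chi of the condition for
   pi /\ ~rho.  The universal closure of (pi /\ ~rho -> chi) belongs to Th(K), which yields the
   consequence over D+(B).  Given h : <a> ->> A', the condition embeds A' into some B'' with
   witnesses b''; the subalgebra of B'' generated by the image of a and by b'' is in K and, by
   the universal property of the presentation, is a quotient of B. *)

Section Terms.
Variable L : signature.

Fixpoint subst V W (s : V -> term L W) (t : term L V) : term L W :=
  match t with
  | Var x => s x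
  | App f args => App (fun i => subst s (args i))
  end.

Definition substp V W (s : V -> term L W) (e : equation L V) : equation L W :=
  (subst s e.1, subst s e.2).

Lemma eval_subst (A : algebra L) V W (s : V -> term L W) (v : W -> A) t :
  eval v (subst s t) = eval (fun x => eval v (s x)) t.
Proof. by elim: t => [x|f args IH] //=; congr op; apply: funext => i; apply: IH. Qed.

Lemma eval_hom (A B : algebra L) (g : A -> B) V (c : V -> A) t :
  hom g -> eval (fun x => g (c x)) t = g (eval c t).
Proof.
by move=> hg; elim: t => [x|f args IH] //=; rewrite hg; congr op; apply: funext => i; apply: IH.
Qed.

Lemma proj1_sig_inj T (P : T -> Prop) : injective (@proj1_sig T P).
Proof. by case=> x px [y py] /= xy; apply: eq_exist. Qed.

Lemma gen_eval (A : algebra L) V (c : V -> A) t : gen c (eval c t).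
Proof. by elim: t => [x|f args IH] /=; [apply: gen_in | apply: gen_closed]. Qed.

Lemma genP (A : algebra L) V (c : V -> A) x : gen c x <-> exists t, eval c t = x.
Proof.
split=> [cx|[t <-]]; last exact: gen_eval.
apply: (cx (fun x => exists t, eval c t = x)); last by move=> i; exists (Var L i).
move=> f args /(_ _)/cid args_eval.
by exists (App (fun i => proj1_sig (args_eval i))); congr op; apply: funext => i; case: args_eval.
Qed.

Lemma gen_terms (A : algebra L) V W (c : V -> A) (d : W -> A) :
  (forall v, gen d (c v)) -> exists s : V -> term L W, forall v, eval d (s v) = c v.
Proof.
move=> cd; have [s Hs] : {s : V -> term L W & forall v, eval d (s v) = c v}.
  by apply: (@choice _ _ (fun v t => eval d t = c v)) => v; apply/genP.
by exists s.
Qed.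

Lemma gen_trans (A : algebra L) V W (c : V -> A) (d : W -> A) x :
  gen c x -> (forall v, gen d (c v)) -> gen d x.
Proof. by move=> cx cd; apply: cx; first exact: gen_closed. Qed.

Lemma gen_hom (A B : algebra L) (g : A -> B) V (c : V -> A) x :
  hom g -> gen c x -> gen (fun v => g (c v)) (g x).
Proof. by move=> hg /genP [t <-]; rewrite -eval_hom //; apply: gen_eval. Qed.

Lemma gen_tuple_eval (A : algebra L) V (a : V -> A) t :
  proj1_sig (eval (gen_tuple a) t) = eval a t.
Proof. by elim: t => [x|f args IH] //=; congr op; apply: funext => i; apply: IH. Qed.

Lemma generates_gen_tuple (A : algebra L) V (a : V -> A) : generates (gen_tuple a).
Proof.
move=> [y ya]; have /genP [t ty] := ya.
have -> : exist (gen a) y ya = eval (gen_tuple a) t.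
  by apply: proj1_sig_inj; rewrite gen_tuple_eval.
exact: gen_eval.
Qed.

Lemma hom_from_generates (D C : algebra L) V (c : V -> D) (w : V -> C) :
  generates c -> (forall t1 t2, eval c t1 = eval c t2 -> eval w t1 = eval w t2) ->
  exists g : D -> C, hom g /\ forall v, g (c v) = w v.
Proof.
move=> c_gen cw; have [T HT] := gen_terms (c := id) c_gen.
exists (fun x => eval w (T x)); split=> [f args|v].
  by apply: (cw _ (App (fun i => T (args i)))); rewrite /= HT; congr op; apply: funext => i.
by apply: (cw _ (Var L v)); rewrite HT.
Qed.

Lemma hom_onto (D C : algebra L) V (c : V -> D) (w : V -> C) (g : D -> C) :
  hom g -> (forall v, g (c v) = w v) -> generates w -> forall y, exists x, g x = y.
Proof.
move=> hg gcw w_gen y; have /genP [t <-] := w_gen y.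
by exists (eval c t); rewrite -eval_hom //; congr eval; apply: funext.
Qed.

Lemma corestrict_hom (A B : algebra L) (e : A -> B) V (w : V -> B) :
  hom e -> (forall y, gen w (e y)) ->
  exists e' : A -> SubGen w, hom e' /\ forall y, proj1_sig (e' y) = e y.
Proof.
move=> he e_gen; exists (fun y => exist (gen w) (e y) (e_gen y)); split=> // f args.
by apply: proj1_sig_inj; rewrite /= he.
Qed.

End Terms.

Section Equations.
Variable L : signature.
Implicit Types (A B M : algebra L).

Lemma sat_eq_subst A V W (s : V -> term L W) (v : W -> A) e :
  sat_eq v (substp s e) <-> sat_eq (fun x => eval v (s x)) e.
Proof. by rewrite /sat_eq /= !eval_subst. Qed.

Lemma sat_eqs_subst A V W (s : V -> term L W) (v : W -> A) P :
  sat_eqs v (map (substp s) P) <-> sat_eqs (fun x => eval v (s x)) P.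
Proof. by elim: P => [|e P IH] //=; rewrite sat_eq_subst IH. Qed.

Lemma sat_neqs_subst A V W (s : V -> term L W) (v : W -> A) P :
  sat_neqs v (map (substp s) P) <-> sat_neqs (fun x => eval v (s x)) P.
Proof. by elim: P => [|e P IH] //=; rewrite sat_eq_subst IH. Qed.

Lemma sat_eqs_cat A V (v : V -> A) P Q :
  sat_eqs v (P ++ Q) <-> sat_eqs v P /\ sat_eqs v Q.
Proof. by elim: P => [|e P IH] /=; [tauto | rewrite IH; tauto]. Qed.

Lemma sat_eqs_mapP A V (v : V -> A) (X : eqType) (f : X -> equation L V) s :
  sat_eqs v (map f s) <-> {in s, forall x, sat_eq v (f x)}.
Proof.
elim: s => [|y s IH] /=; first by split.
rewrite IH; split=> [[fy fs] x|fs]; first by rewrite inE => /predU1P [->|/fs].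
by split=> [|x xs]; apply: fs; rewrite inE ?eqxx ?xs ?orbT.
Qed.

Lemma sat_eqs_hom A B (g : A -> B) V (c : V -> A) P :
  hom g -> sat_eqs c P -> sat_eqs (fun x => g (c x)) P.
Proof.
move=> hg; elim: P => [|e P IH] //= [ce cP]; split; last exact: IH.
by rewrite /sat_eq !eval_hom // ce.
Qed.

Lemma sat_posdiag_eqs B M (g : B -> M) V (c : V -> B) P :
  sat_posdiag g -> sat_eqs c P -> sat_eqs (fun x => g (c x)) P.
Proof.
move=> gD; elim: P => [|e P IH] //= [ce cP]; split; last exact: IH.
have := gD (subst (fun x => Var L (c x)) e.1) (subst (fun x => Var L (c x)) e.2).
by rewrite /sat_eq !eval_subst; apply.
Qed.

Lemma sat_eq_gen_tuple A V (w : V -> A) e : sat_eq (gen_tuple w) e <-> sat_eq w e.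
Proof.
rewrite /sat_eq; split=> [/(congr1 (@proj1_sig _ _))|e12]; first by rewrite !gen_tuple_eval.
by apply: proj1_sig_inj; rewrite !gen_tuple_eval.
Qed.

Lemma sat_eqs_gen_tuple A V (w : V -> A) P : sat_eqs (gen_tuple w) P <-> sat_eqs w P.
Proof. by elim: P => [|e P IH] //=; rewrite sat_eq_gen_tuple IH. Qed.

Lemma sat_neqs_gen_tuple A V (w : V -> A) P : sat_neqs (gen_tuple w) P <-> sat_neqs w P.
Proof. by elim: P => [|e P IH] //=; rewrite sat_eq_gen_tuple IH. Qed.

Fixpoint neg_part V (p : seq (literal L V)) : seq (equation L V) :=
  match p with
  | [::] => [::]
  | LPos _ _ :: q => neg_part q
  | LNeg s t :: q => (s, t) :: neg_part q
  end.

Lemma sat_lits_split A V (v : V -> A) p :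
  sat_lits v p <-> sat_eqs v (pos_part p) /\ sat_neqs v (neg_part p).
Proof. by elim: p => [|[s t|s t] p IH] /=; rewrite ?IH /sat_eq /=; tauto. Qed.

Definition lits_of_eqs V (pi rho : seq (equation L V)) : seq (literal L V) :=
  [seq LPos e.1 e.2 | e <- pi] ++ [seq LNeg e.1 e.2 | e <- rho].

Lemma pos_part_lits_of_eqs V (pi rho : seq (equation L V)) :
  pos_part (lits_of_eqs pi rho) = pi.
Proof. by elim: pi => [|[s t] pi /= ->] //; elim: rho => [|[s t] rho]. Qed.

Lemma neg_part_lits_of_eqs V (pi rho : seq (equation L V)) :
  neg_part (lits_of_eqs pi rho) = rho.
Proof. by elim: pi => [|[s t] pi] //; elim: rho => [|[s t] rho /= ->]. Qed.

End Equations.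

Section FinitePresentations.
Variables (L : signature) (K : algebra L -> Prop).

Lemma fin_pres_hom (B C : algebra L) V (c : V -> B) P (w : V -> C) :
  fin_pres K c P -> K C -> sat_eqs w P ->
  exists g : B -> C, hom g /\ forall v, g (c v) = w v.
Proof.
case=> c_gen _ c_iff KC wP; apply: hom_from_generates => // t1 t2 ct.
by have /c_iff/(_ C KC w wP) : sat_eq c (t1, t2) by [].
Qed.

Lemma fin_pres_sat_neqs (A B : algebra L) V (c : V -> B) (v : V -> A) P N :
  fin_pres K c P -> K A -> sat_eqs v P -> sat_neqs v N -> sat_neqs c N.
Proof.
case=> _ _ c_iff KA vP; elim: N => [|e N IH] //= [ve vN]; split; last exact: IH.
by move/c_iff/(_ A KA v vP).
Qed.

Lemma fin_pres_rename (B : algebra L) V W (c : W -> B) (f : V -> W) (g : W -> V) P :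
  cancel f g -> cancel g f ->
  fin_pres K c (map (substp (fun v => Var L (f v))) P) -> fin_pres K (fun v => c (f v)) P.
Proof.
move=> fK gK [c_gen cP c_iff]; split.
- move=> y; apply: (gen_trans (c_gen y)) => w; rewrite -(gK w).
  exact: (gen_in (a := fun v => c (f v))).
- by move: cP; rewrite sat_eqs_subst.
move=> e; rewrite -[sat_eq _ e](sat_eq_subst (fun v => Var L (f v))) c_iff.
split=> [Pe A KA u uP|Pe A KA u].
  have ugf : (fun v => u (g (f v))) = u by apply: funext => v; rewrite fK.
  have := Pe A KA (fun w => u (g w)).
  by rewrite sat_eqs_subst sat_eq_subst /= ugf; apply.
by rewrite sat_eqs_subst sat_eq_subst; apply: Pe.
Qed.

Lemma fin_pres_transfer (B : algebra L) V (W : finType) (c : V -> B) (d : W -> B) P :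
  K B -> fin_pres K c P -> (forall v, gen d (c v)) -> (forall w, gen c (d w)) ->
  exists Q, fin_pres K d Q.
Proof.
move=> KB [c_gen cP c_iff] /gen_terms [s ds] /gen_terms [tau ctau].
have Es : (fun v => eval d (s v)) = c by apply: funext.
have Etau : (fun w => eval c (tau w)) = d by apply: funext.
pose Q := map (substp s) P ++ [seq (Var L w, subst s (tau w)) | w <- enum W].
have dQ : sat_eqs d Q.
  apply/sat_eqs_cat; split; first by rewrite sat_eqs_subst Es.
  by apply/sat_eqs_mapP => w _; rewrite /sat_eq /= eval_subst Es ctau.
exists Q; split=> // [y|e].
  by apply: (gen_trans (c_gen y)) => v; rewrite -ds; apply: gen_eval.
split=> [de A KA u /sat_eqs_cat [uP /sat_eqs_mapP u_tau]|]; last by apply.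
have u_s_tau : (fun w => eval (fun v => eval u (s v)) (tau w)) = u.
  by apply: funext => w; rewrite -eval_subst -(u_tau w (mem_enum _ w)).
have ce : sat_eq c (substp tau e) by rewrite sat_eq_subst Etau.
move: uP; rewrite sat_eqs_subst => /((c_iff _).1 ce A KA).
by rewrite sat_eq_subst u_s_tau.
Qed.

Lemma has_fin_pres_sum n m (P : seq (equation L ('I_n + 'I_m))) :
  has_fin_pres K -> (exists A, K A /\ exists v : _ -> A, sat_eqs v P) ->
  exists B, K B /\ exists (a : 'I_n -> B) (b : 'I_m -> B), fin_pres K (tup2 a b) P.
Proof.
move=> hfp [A [KA [v vP]]].
have [|B [KB [c cP]]] := hfp _ (map (substp (fun x => Var L (unsplit x))) P).
  exists A; split=> //; exists (fun k => v (split k)); rewrite sat_eqs_subst /=.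
  by have -> : (fun x => v (split (unsplit x))) = v by apply: funext => x; rewrite unsplitK.
exists B; split=> //; exists (fun i => c (unsplit (inl i))), (fun j => c (unsplit (inr j))).
have -> : tup2 (fun i => c (unsplit (inl i))) (fun j => c (unsplit (inr j))) =
          fun x => c (unsplit x) by apply: funext; case.
exact: fin_pres_rename unsplitK splitK cP.
Qed.

Lemma fin_pres_drop_generated (B : algebra L) n m (a : 'I_n -> B) (b : 'I_m -> B) P :
  K B -> fin_pres K (tup2 a b) P ->
  exists m' (b' : 'I_m' -> B) Q,
    [/\ forall k, ~ gen a (b' k), forall x, gen (tup2 a b') (tup2 a b x)
      & fin_pres K (tup2 a b') Q].
Proof.
move=> KB abP; pose J := [pred j | ~~ `[< gen a (b j) >]].
pose b' (k : 'I_#|J|) := b (enum_val k).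
have ab'_gen x : gen (tup2 a b') (tup2 a b x).
  case: x => [i|j] /=; first exact: (gen_in (a := tup2 a b') (inl i)).
  have [Jj|/negbNE/asboolP a_bj] := boolP (j \in J).
    by rewrite -(enum_rankK_in Jj Jj); apply: (gen_in (a := tup2 a b') (inr _)).
  by apply: (gen_trans a_bj) => i; apply: (gen_in (a := tup2 a b') (inl i)).
have ab_gen w : gen (tup2 a b) (tup2 a b' w).
  by case: w => [i|k]; [apply: (gen_in (inl i)) | apply: (gen_in (inr (enum_val k)))].
have [Q ab'Q] := fin_pres_transfer KB abP ab'_gen ab_gen.
exists #|J|, b', Q; split=> // k.
by have := enum_valP k; rewrite inE => /asboolPn.
Qed.

End FinitePresentations.

Section UniversalClosure.
Variable L : signature.

Fixpoint fo_of_qff V (q : qff L V) : fo L V :=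
  match q with
  | QTrue => FTrue L V
  | QFalse => FFalse L V
  | QEq s t => FEq s t
  | QNot q => FNot (fo_of_qff q)
  | QAnd q r => FAnd (fo_of_qff q) (fo_of_qff r)
  | QOr q r => FOr (fo_of_qff q) (fo_of_qff r)
  | QImp q r => FImp (fo_of_qff q) (fo_of_qff r)
  end.

Lemma sat_fo_of_qff (A : algebra L) V (v : V -> A) q : sat (fo_of_qff q) v <-> satq v q.
Proof. by elim: q => //= [q IHq|q IHq r IHr|q IHq r IHr|q IHq r IHr]; tauto. Qed.

Fixpoint qsubst V W (s : V -> term L W) (q : qff L V) : qff L W :=
  match q with
  | QTrue => QTrue L W
  | QFalse => QFalse L W
  | QEq t1 t2 => QEq (subst s t1) (subst s t2)
  | QNot q => QNot (qsubst s q)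
  | QAnd q r => QAnd (qsubst s q) (qsubst s r)
  | QOr q r => QOr (qsubst s q) (qsubst s r)
  | QImp q r => QImp (qsubst s q) (qsubst s r)
  end.

Lemma satq_subst (A : algebra L) V W (s : V -> term L W) (v : W -> A) q :
  satq v (qsubst s q) <-> satq (fun x => eval v (s x)) q.
Proof.
by elim: q => //= [t1 t2|q IHq|q IHq r IHr|q IHq r IHr|q IHq r IHr]; rewrite ?eval_subst; tauto.
Qed.

Definition qff_of_lits V (p : seq (literal L V)) : qff L V :=
  foldr (fun l q => match l with
                    | LPos s t => QAnd (QEq s t) q
                    | LNeg s t => QAnd (QNot (QEq s t)) q end) (QTrue L V) p.

Lemma satq_qff_of_lits (A : algebra L) V (v : V -> A) p : satq v (qff_of_lits p) <-> sat_lits v p.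
Proof. by elim: p => [|[s t|s t] p IH] //=; tauto. Qed.

(* A variable type with exactly [k] elements, over which [FAll] can be iterated. *)
Fixpoint optn (k : nat) : Type := if k is k'.+1 then option (optn k') else Empty_set.

Fixpoint close_all (k : nat) : fo L (optn k) -> fo L Empty_set :=
  if k is k'.+1 then fun phi => close_all (FAll phi) else id.

Lemma sat_close_all (M : algebra L) k (phi : fo L (optn k)) :
  sat (close_all phi) (no_var M) <-> forall v : optn k -> M, sat phi v.
Proof.
elim: k phi => [|k IH] phi /=.
  by split=> [phiM v|]; [have -> : v = no_var M by apply: funext; case | apply].
rewrite IH /=; split=> [phiM v|phiM v c]; last exact: phiM.
by have := phiM (fun x => v (Some x)) (v None); congr sat; apply: funext; case.
Qed.

Fixpoint optn_of_ord k : 'I_k -> optn k :=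
  if k is k'.+1 then fun i => omap (@optn_of_ord k') (unlift ord0 i)
  else fun i => False_rect _ (notF (ltn_ord i)).

Fixpoint ord_of_optn k : optn k -> 'I_k :=
  if k is k'.+1 then fun o => if o is Some x then lift ord0 (ord_of_optn x) else ord0
  else fun e => match e with end.

Lemma optn_of_ordK k : cancel (@optn_of_ord k) (@ord_of_optn k).
Proof.
elim: k => [[]//|k IH] i /=.
by case: unliftP => [j ->|->] //=; rewrite IH.
Qed.

Definition forall_closure (V : finType) (q : qff L V) : fo L Empty_set :=
  close_all (fo_of_qff (qsubst (fun x => Var L (optn_of_ord (enum_rank x))) q)).

Lemma sat_forall_closure (M : algebra L) (V : finType) (q : qff L V) :
  sat (forall_closure q) (no_var M) <-> forall v : V -> M, satq v q.
Proof.
rewrite sat_close_all; split=> [qM v|qM u]; last by rewrite sat_fo_of_qff satq_subst.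
have := qM (fun o => v (enum_val (ord_of_optn o))); rewrite sat_fo_of_qff satq_subst /=.
by congr satq; apply: funext => x; rewrite optn_of_ordK enum_rankK.
Qed.

End UniversalClosure.

Section Conservativity.
Variables (L : signature) (K : algebra L -> Prop).

Lemma ThD_conseq_hom (A B : algebra L) n m (a : 'I_n -> B) (b : 'I_m -> B) rho chi (g : B -> A) :
  ThD_conseq K a b rho chi -> K A -> hom g ->
  sat_neqs (fun k => g (tup2 a b k)) rho -> satq (fun i => g (a i)) chi.
Proof.
move=> chiD KA hg; apply: chiD => [phi|s t st]; first exact.
have g_eval u : eval g u = g (eval id u) by apply: (eval_hom id u hg).
by rewrite !g_eval st.
Qed.

Lemma ThD_conseq_of_valid (B : algebra L) n m (a : 'I_n -> B) (b : 'I_m -> B) pi rho chi :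
  (forall A, K A -> forall v : _ -> A,
     sat_lits v (lits_of_eqs pi rho) -> satq (fun i => v (inl i)) chi) ->
  sat_eqs (tup2 a b) pi -> ThD_conseq K a b rho chi.
Proof.
move=> chi_valid ab_pi M g MK gD g_rho.
pose psi_chi := QImp (qff_of_lits (lits_of_eqs pi rho)) (qsubst (fun i => Var L (inl i)) chi).
have /sat_forall_closure/(_ (fun k => g (tup2 a b k))) : sat (forall_closure psi_chi) (no_var M).
  apply: MK => A KA; apply/sat_forall_closure => v /=.
  by rewrite satq_qff_of_lits satq_subst; apply: chi_valid.
rewrite /= satq_qff_of_lits satq_subst; apply; apply/sat_lits_split.
by rewrite pos_part_lits_of_eqs neg_part_lits_of_eqs; split=> //; apply: sat_posdiag_eqs.
Qed.

Lemma valid_of_ThD_conseq (B : algebra L) n m m' (a : 'I_n -> B) (b : 'I_m -> B)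
    (b' : 'I_m' -> B) s psi chi :
  fin_pres K (tup2 a b) (pos_part psi) -> (forall x, eval (tup2 a b') (s x) = tup2 a b x) ->
  ThD_conseq K a b' (map (substp s) (neg_part psi)) chi ->
  forall A, K A -> forall v : _ -> A, sat_lits v psi -> satq (fun i => v (inl i)) chi.
Proof.
move=> abP ab's chiD A KA v /sat_lits_split [vP vN].
have [g [hg gv]] := fin_pres_hom abP KA vP.
have gab' x : eval (fun k => g (tup2 a b' k)) (s x) = v x by rewrite eval_hom // ab's gv.
have := ThD_conseq_hom chiD KA hg; rewrite sat_neqs_subst (funext gab') => /(_ vN).
by have -> : (fun i => g (a i)) = (fun i => v (inl i)) by apply: funext => i; apply: (gv (inl i)).
Qed.

Lemma hom_subgen_of_entailed (A B : algebra L) n m (a : 'I_n -> B) (b : 'I_m -> B) P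
    (a0 : 'I_n -> A) :
  fin_pres K (tup2 a b) P ->
  (forall s t : term L 'I_n,
     (forall A0, K A0 -> forall v : 'I_n + 'I_m -> A0, sat_eqs v P ->
        eval (fun i => v (inl i)) s = eval (fun i => v (inl i)) t) ->
     eval a0 s = eval a0 t) ->
  exists h : SubGen a -> A, hom h /\ forall i, h (gen_tuple a i) = a0 i.
Proof.
move=> [_ _ ab_iff] a0_eqs; apply: hom_from_generates; first exact: generates_gen_tuple.
move=> s t st; have {}st : sat_eq a (s, t) by apply/sat_eq_gen_tuple.
apply: a0_eqs => A0 KA0 v vP.
have : sat_eq (tup2 a b) (substp (fun i => Var L (inl i)) (s, t)) by rewrite sat_eq_subst.
by move/ab_iff/(_ A0 KA0 v vP); rewrite sat_eq_subst.
Qed.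

Lemma amalg_condition_of_CCEP : has_fin_pres K -> CCEP K -> amalg_condition K.
Proof.
move=> hfp ccep n m psi.
have [[A0 [KA0 [v0 /sat_lits_split [v0P v0N]]]]|psi_unsat] :=
  pselect (exists A, K A /\ exists v : _ -> A, sat_lits v psi); last first.
  exists (QFalse L 'I_n); split=> [A KA v psiv|//].
  by apply: psi_unsat; exists A; split=> //; exists v.
have [|B [KB [a [b abP]]]] := has_fin_pres_sum (P := pos_part psi) hfp.
  by exists A0; split=> //; exists v0.
have ab_neg := fin_pres_sat_neqs abP KA0 v0P v0N.
have [m' [b' [Q [b'_out /gen_terms [s ab's] ab'Q]]]] := fin_pres_drop_generated KB abP.
have ab'_rho : sat_neqs (tup2 a b') (map (substp s) (neg_part psi)).
  by rewrite sat_neqs_subst (funext ab's).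
have [chi [chiD chi_ext]] := ccep B n m' a b' Q KB ab'Q b'_out _ ab'_rho.
exists chi; split; first exact: valid_of_ThD_conseq abP ab's chiD.
move=> A a0 KA a0_gen a0_chi a0_eqs.
have [h [hh ha0]] := hom_subgen_of_entailed abP a0_eqs.
have [|B' [e [h' [KB' [he [e_inj [hh' [_ [h'e ab'_rho']]]]]]]]] :=
  chi_ext A h KA hh (hom_onto hh ha0 a0_gen).
  by have -> : (fun i => h (gen_tuple a i)) = a0 by apply: funext.
have h'a i : h' (a i) = e (a0 i) by rewrite -ha0 -(h'e (gen_tuple a i)).
have h'ab x : h' (tup2 a b x) = tup2 (fun i => e (a0 i)) (fun j => h' (b j)) x by case: x.
exists B', e, (fun j => h' (b j)); split=> //; apply/sat_lits_split; split.
  by rewrite -(funext h'ab); apply: sat_eqs_hom => //; case: abP.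
have h'ab' : tup2 (fun i => e (h (gen_tuple a i))) (fun k => h' (b' k)) =
             fun k => h' (tup2 a b' k).
  by apply: funext => -[i|k] //=; rewrite h'a ha0.
move: ab'_rho'; rewrite sat_neqs_subst h'ab' -(funext h'ab).
by congr sat_neqs; apply: funext => x; rewrite eval_hom // ab's.
Qed.

Lemma CCEP_of_amalg_condition :
  (forall (B : algebra L) (S : B -> Prop) (hS : Defs.closed S), K B -> K (SubAlg hS)) ->
  amalg_condition K -> CCEP K.
Proof.
move=> Ksub amalg B n m a b pi KB abP b_out rho ab_rho.
have [chi [chi_valid chi_amalg]] := amalg n m (lits_of_eqs pi rho).
have [_ ab_pi _] := abP.
exists chi; split; first exact: ThD_conseq_of_valid chi_valid ab_pi.
move=> A' h KA' hh h_onto h_chi.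
pose a' i := h (gen_tuple a i).
have a'_gen : generates a'.
  by move=> y; have [x <-] := h_onto y; apply: gen_hom => //; apply: generates_gen_tuple.
have [|B'' [e [b'' [KB'' he e_inj]]]] := chi_amalg A' a' KA' a'_gen h_chi.
  move=> s t; rewrite pos_part_lits_of_eqs => st; rewrite !eval_hom //; congr h.
  by apply: proj1_sig_inj; rewrite !gen_tuple_eval; apply: (st B KB (tup2 a b) ab_pi).
rewrite sat_lits_split pos_part_lits_of_eqs neg_part_lits_of_eqs => -[wP wN].
pose w := tup2 (fun i => e (a' i)) b''.
have [e' [he' e'e]] : exists e' : A' -> SubGen w, hom e' /\ forall y, proj1_sig (e' y) = e y.
  apply: corestrict_hom => // y; have /genP [t <-] := a'_gen y.
  by rewrite -eval_hom //; apply: (gen_trans (gen_eval t)) => i; apply: (gen_in (a := w) (inl i)).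
have KBw : K (SubGen w) := Ksub _ _ _ KB''.
have [h' [hh' h'w]] := fin_pres_hom abP KBw ((sat_eqs_gen_tuple w pi).2 wP).
have h'a i : h' (a i) = e' (h (gen_tuple a i)).
  by rewrite (h'w (inl i)); apply: proj1_sig_inj; rewrite e'e.
exists (SubGen w), e', h'; do !split => //.
- by move=> y1 y2 /(congr1 (@proj1_sig _ _)); rewrite !e'e => /e_inj.
- exact: hom_onto hh' h'w (generates_gen_tuple (a := w)).
- move=> x; have /genP [t <-] := generates_gen_tuple (a := a) x.
  rewrite gen_tuple_eval -(eval_hom _ _ hh') -(eval_hom _ _ hh) -(eval_hom _ _ he').
  by congr eval; apply: funext => i; apply: h'a.
have -> : tup2 (fun i => e' (h (gen_tuple a i))) (fun j => h' (b j)) = gen_tuple w.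
  by apply: funext => -[i|j] /=; [rewrite -h'a; exact: (h'w (inl i)) | exact: (h'w (inr j))].
exact/sat_neqs_gen_tuple.
Qed.

End Conservativity.

Theorem propositionA3 (L : signature) (hconst : exists f : opsym L, oparity f = 0)
    (K : algebra L -> Prop) :
  universal_class K -> has_fin_pres K ->
  (CCEP K <-> amalg_condition K).
Proof.
move=> [_ Ksub _] hfp; split; first exact: amalg_condition_of_CCEP.
exact: CCEP_of_amalg_condition.
Qed.
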